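(* For any parity decision tree $T$ on $\{-1,1\}^n$ of depth $d$, $$\mathbf{E}_{\ell\in T}\Big[\Big(\sum_{i=1}^n \ell_i\Big)^2\Big]\le 2d.$$
   Context: A parity decision tree on $\{-1,1\}^n$ is a rooted full binary tree whose internal nodes are labelled by subsets $S\subseteq[n]$, whose two outgoing edges are labelled $-1$ and $1$; an input $x$ follows from a node labelled $S$ the edge labelled $\prod_{i\in S}x_i$, reaching a unique leaf. Depth is the maximum number of internal nodes on a root-to-leaf path. Each leaf is represented as a vector $\ell\in\{-1,0,1\}^n$ where $\ell_i$ is the expected value of $x_i$ over uniformly random inputs $x$ that reach that leaf. $\mathbf{E}_{\ell\in T}$ denotes expectation over the leaf reached by a uniformly random input $x\in\{-1,1\}^n$ (i.e., each leaf weighted by the probability of reaching it). *)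

From HB Require Import structures.
From mathcomp Require Import all_boot all_order all_algebra.
Set Implicit Arguments. Unset Strict Implicit. Unset Printing Implicit Defensive.
Import Order.TTheory GRing.Theory Num.Theory.
Local Open Scope ring_scope.

(* A point of {-1,1}^n is encoded as x : {ffun 'I_n -> bool};
   coordinate i has real value  xval x i = -1 if x i, else 1. *)
Definition cube (n : nat) := {ffun 'I_n -> bool}.

Definition xval {R : numDomainType} {n : nat} (x : cube n) (i : 'I_n) : R :=
  if x i then -1 else 1.

(* Parity decision trees: a leaf, or a node labelled by S ⊆ [n] with
   a (-1)-subtree and a (1)-subtree. *)
Inductive pdt (n : nat) : Type :=
| PLeaf : pdt n
| PNode : {set 'I_n} -> pdt n -> pdt n -> pdt n.
Arguments PLeaf {n}.

Definition chi {R : numDomainType} {n : nat} (x : cube n) (S : {set 'I_n}) : R :=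
  \prod_(i in S) xval x i.

(* The leaf reached by x, identified by its root-to-leaf path
   (true = edge labelled 1, false = edge labelled -1). *)
Fixpoint reach {R : numDomainType} {n : nat} (t : pdt n) (x : cube n) : seq bool :=
  match t with
  | PLeaf => [::]
  | PNode lab tm tp =>
      if chi (R := R) x lab == 1 then true :: reach (R := R) tp x
      else false :: reach (R := R) tm x
  end.

Fixpoint depth {n : nat} (t : pdt n) : nat :=
  match t with
  | PLeaf => 0%N
  | PNode _ tm tp => (maxn (depth tm) (depth tp)).+1
  end.

Definition leafvec {R : numFieldType} {n : nat} (t : pdt n) (x : cube n)
    (i : 'I_n) : R :=
  (\sum_(y : cube n | reach (R := R) t y == reach (R := R) t x) xval y i)
  / (#|[set y : cube n | reach (R := R) t y == reach (R := R) t x]|%:R).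

(* E_{ℓ ∈ T}[ F ℓ ], the leaf reached by a uniformly random input *)
Definition leafExp {R : numFieldType} {n : nat} (t : pdt n)
    (F : ('I_n -> R) -> R) : R :=
  (\sum_(x : cube n) F (leafvec t x)) / (#|{: cube n}|%:R).

(* Every leaf of a parity decision tree of depth d is an affine subspace L of
   F_2^n with at least 2^(n-d) points.  Writing g = x_1 + ... + x_n, the leaf
   vector satisfies (sum_i l_i)^2 = (E_L g)^2 = E_L g^2 - Var_L g, and E g^2 = n
   over the whole cube, so it suffices that Var_L g >= n - 2d on every leaf.
   On an affine subspace each x_i and each x_i x_j is either constant or
   balanced, so a non-constant coordinate x_i with no x_i x_j (j <> i)
   constant on L ("isolated") is uncorrelated with all others and contributes
   exactly 1 to Var_L g, while the other coordinates contribute a nonnegative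
   amount.  At most 2d coordinates are not isolated: L is determined by its at
   least n - d pivot coordinates, and each non-pivot accounts for at most one
   non-isolated pivot. *)

From mathcomp Require Import all_boot all_order all_algebra.
From mathcomp Require Import ring lra zify.
Set Implicit Arguments. Unset Strict Implicit. Unset Printing Implicit Defensive.
Import Order.TTheory GRing.Theory Num.Theory.
Local Open Scope ring_scope.

Section AffineLeaves.
Variables (R : numDomainType) (n : nat).
Implicit Types (x y z w a b : cube n) (S : {set 'I_n}) (A : {set cube n}) (t : pdt n).

Definition addc x y : cube n := [ffun i => x i (+) y i].

Definition translate a b y := addc (addc y a) b.

Lemma translateK a b : involutive (translate a b).
Proof.
by move=> y; apply/ffunP => i; rewrite !ffunE; case: (y i); case: (a i); case: (b i).
Qed.

Lemma xval_add x y i : xval (R := R) (addc x y) i = xval x i * xval y i.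
Proof. by rewrite /xval ffunE; case: (x i); case: (y i); rewrite ?mulN1r ?opprK ?mul1r. Qed.

Lemma chi_add x y S : chi (R := R) (addc x y) S = chi x S * chi y S.
Proof. by rewrite /chi -big_split; apply: eq_bigr => i _; apply: xval_add. Qed.

Lemma chi_pm1 x S : chi (R := R) x S = 1 \/ chi (R := R) x S = -1.
Proof.
apply: (big_ind (fun v : R => v = 1 \/ v = -1)); first by left.
  by move=> u v [] -> [] ->; rewrite ?mul1r ?mulN1r ?opprK; [left|right|right|left].
by move=> i _; rewrite /xval; case: (x i); [right|left].
Qed.

Definition parity x S := chi (R := R) x S != 1.

Lemma parity_add x y S : parity (addc x y) S = parity x S (+) parity y S.
Proof.
have N1 : (-1 : R) != 1 by rewrite lt_eqF // (lt_trans (ltrN10 R)) ?ltr01.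
rewrite /parity chi_add.
by case: (chi_pm1 x S) => ->; case: (chi_pm1 y S) => ->;
  rewrite ?mul1r ?mulr1 ?mulN1r ?opprK ?eqxx ?(negbTE N1).
Qed.

Lemma reach_node S tm tp x : reach (R := R) (PNode S tm tp) x =
  if parity x S then false :: reach (R := R) tm x else true :: reach (R := R) tp x.
Proof. by rewrite /= /parity; case: eqP. Qed.

(* Affine subspaces of F_2^n are the nonempty sets closed under y + z + w. *)
Definition affine A :=
  forall y z w, y \in A -> z \in A -> w \in A -> addc (addc y z) w \in A.

Lemma affine_setT : affine [set: cube n].
Proof. by move=> *; rewrite inE. Qed.

Definition slice A S x := A :&: [set y | parity y S == parity x S].

Lemma affine_slice A S x : affine A -> affine (slice A S x).
Proof.
move=> affA y z w; rewrite !inE => /andP[yA /eqP ey] /andP[zA /eqP ez] /andP[wA /eqP ew].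
by rewrite affA //= !parity_add ey ez ew addbK.
Qed.

Lemma card_slice A S x : affine A -> x \in A -> (#|A| <= 2 * #|slice A S x|)%N.
Proof.
move=> affA xA; rewrite -(cardsID [set y | parity y S == parity x S] A) mul2n -addnn.
rewrite leq_add2l; case: (set_0Vmem (A :\: [set y | parity y S == parity x S])) => [->|[b]].
  by rewrite cards0.
rewrite !inE => /andP[pb bA].
rewrite -(card_imset _ (inv_inj (translateK x b))).
apply/subset_leq_card/subsetP => u /imsetP[y]; rewrite !inE => /andP[py yA] ->.
rewrite affA //= !parity_add.
by move: py pb; case: (parity y S); case: (parity b S); case: (parity x S).
Qed.

Definition leaf t x := [set y | reach (R := R) t y == reach (R := R) t x].

Lemma reach_add3 t y z w :
  reach (R := R) t z = reach (R := R) t y -> reach (R := R) t w = reach (R := R) t y ->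
  reach (R := R) t (addc (addc y z) w) = reach (R := R) t y.
Proof.
elim: t => [//|S tm IHm tp IHp]; rewrite !reach_node !parity_add.
by case: (parity y S); case: (parity z S); case: (parity w S) => //= -[ez] [ew];
  rewrite ?IHm ?IHp.
Qed.

Lemma affine_leaf t x : affine (leaf t x).
Proof.
by move=> y z w; rewrite !inE => /eqP ey /eqP ez /eqP ew; rewrite reach_add3 ?ey ?ez.
Qed.

Lemma leaf_node A S tm tp x : A :&: leaf (PNode S tm tp) x =
  slice A S x :&: leaf (if parity x S then tm else tp) x.
Proof.
apply/setP => y; rewrite !inE !reach_node -andbA; congr (_ && _).
by case: (parity y S); case: (parity x S); rewrite ?andbF.
Qed.

Lemma card_leaf A t x : affine A -> x \in A -> (#|A| <= #|A :&: leaf t x| * 2 ^ depth t)%N.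
Proof.
elim: t A => [|S tm IHm tp IHp] A affA xA.
  by rewrite muln1; apply/subset_leq_card/subsetP => y yA; rewrite !inE yA.
have affS : affine (slice A S x) by apply: affine_slice.
have xS : x \in slice A S x by rewrite !inE xA eqxx.
apply: (leq_trans (card_slice S affA xA)).
rewrite leaf_node /= expnS mulnCA leq_pmul2l //.
case: (parity x S).
  by apply: (leq_trans (IHm _ affS xS)); rewrite leq_mul2l leq_pexp2l ?leq_maxl ?orbT.
by apply: (leq_trans (IHp _ affS xS)); rewrite leq_mul2l leq_pexp2l ?leq_maxr ?orbT.
Qed.

Lemma sum_odd_translation A (f : cube n -> R) a b : affine A -> a \in A -> b \in A ->
  (forall y, f (translate a b y) = - f y) -> \sum_(y in A) f y = 0.
Proof.
move=> affA aA bA fodd.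
have tA y : (translate a b y \in A) = (y \in A).
  by apply/idP/idP => [|yA]; [rewrite -{2}[y](translateK a b) => ?|]; apply: affA.
have : \sum_(y in A) f y = - \sum_(y in A) f y.
  rewrite {1}(reindex_inj (inv_inj (translateK a b))) -sumrN.
  by apply: eq_big => [y|y _]; rewrite ?tA ?fodd.
move/eqP; rewrite -subr_eq0 opprK -mulr2n mulrn_eq0 /=; exact: eqP.
Qed.

End AffineLeaves.

Section Pivots.
Variables (n : nat) (L : {set cube n}).
Implicit Types (i j k : 'I_n).

Definition coord_const i := [forall y in L, forall z in L, y i == z i].

Definition parity_const i j := [forall y in L, forall z in L, y i (+) y j == z i (+) z j].

Definition isolated :=
  [set i | ~~ coord_const i & [forall j, (j != i) ==> ~~ parity_const i j]].

Definition pivots :=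
  [set i | ~~ coord_const i & [forall j : 'I_n, (j < i)%N ==> ~~ parity_const i j]].

Lemma parity_constC i j : parity_const i j = parity_const j i.
Proof.
by apply/idP/idP => /forall_inP pc; apply/forall_inP => y yL; apply/forall_inP => z zL;
  have /forall_inP/(_ z zL) := pc y yL; rewrite addbC [z j (+) _]addbC.
Qed.

Lemma parity_const_trans j i k : parity_const i j -> parity_const j k -> parity_const i k.
Proof.
move=> /forall_inP pij /forall_inP pjk; apply/forall_inP => y yL; apply/forall_inP => z zL.
have /forall_inP/(_ z zL) := pij y yL; have /forall_inP/(_ z zL) := pjk y yL.
by case: (y i); case: (y j); case: (y k); case: (z i); case: (z j); case: (z k).
Qed.

(* A point of L is determined by its pivot coordinates: every other coordinate
   is constant or equals a smaller one up to a constant. *)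
Lemma card_le_pivots : (#|L| <= 2 ^ #|pivots|)%N.
Proof.
pose restr (y : cube n) : {ffun {i | i \in pivots} -> bool} := [ffun k => y (val k)].
have restr_inj : {in L &, injective restr}.
  move=> y y' yL y'L /ffunP eq_piv; apply/ffunP => i.
  suff eq_below m : forall i, (i < m)%N -> y i = y' i by apply: (eq_below n).
  elim: m => [//|m IH] {}i lt_im.
  case iP: (i \in pivots); first by have := eq_piv (exist _ i iP); rewrite !ffunE.
  move: iP; rewrite inE => /negbT; rewrite negb_and negbK => /orP[ci | /forallPn[j]].
    by move/forall_inP: ci => /(_ y yL)/forall_inP/(_ y' y'L)/eqP.
  rewrite negb_imply negbK => /andP[ji /forall_inP/(_ y yL)/forall_inP/(_ y' y'L)].
  by rewrite (IH j (leq_trans ji lt_im)); case: (y i); case: (y' i); case: (y' j).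
rewrite -(card_in_imset restr_inj); apply: (leq_trans (max_card _)).
by rewrite card_ffun card_bool card_sig.
Qed.

(* A non-isolated pivot is parity-linked to a larger coordinate, which is then
   not a pivot; distinct pivots give distinct such coordinates. *)
Lemma card_nonisolated : (#|~: isolated| <= 2 * #|~: pivots|)%N.
Proof.
rewrite -(cardsID (~: pivots) (~: isolated)) mul2n -addnn; apply: leq_add.
  exact/subset_leq_card/subsetIr.
pose next i := odflt i [pick j : 'I_n | (i < j)%N && parity_const i j].
have nextP i : i \in ~: isolated :\: ~: pivots -> (i < next i)%N && parity_const i (next i).
  rewrite !inE negbK => /andP[/andP[-> /forallP piv]]; rewrite negb_forall.
  case/existsP => j; rewrite negb_imply negbK => /andP[ji pij].
  rewrite /next; case: pickP => [//|/(_ j)]; rewrite pij andbT.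
  have := piv j; rewrite pij implybF -leqNgt leq_eqVlt => /orP[/eqP/val_inj eij|->//].
  by move: ji; rewrite eij eqxx.
rewrite -(card_in_imset (f := next)); last first.
  move=> i i' iM i'M eq_next; move: (nextP i iM) (nextP i' i'M).
  rewrite -eq_next => /andP[_ p1] /andP[_]; rewrite parity_constC => p2.
  have p := parity_const_trans p1 p2.
  move: iM i'M; rewrite !inE !negbK.
  move=> /andP[/andP[_ /forallP piv1] _] /andP[/andP[_ /forallP piv2] _].
  case: (ltngtP i i') => [lt|lt|]; last exact: val_inj.
    by have := piv2 i; rewrite lt parity_constC p.
  by have := piv1 i'; rewrite lt p.
apply/subset_leq_card/subsetP => j /imsetP[i iM ->]; have /andP[lt p] := nextP i iM.
rewrite !inE negb_and negbK negb_forall; apply/orP; right; apply/existsP; exists i.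
by rewrite lt parity_constC p.
Qed.

Lemma card_isolated d : (2 ^ n <= #|L| * 2 ^ d)%N -> (n <= #|isolated| + 2 * d)%N.
Proof.
move=> cardL.
have piv : (n <= #|pivots| + d)%N.
  rewrite -(@leq_exp2l 2) // expnD; apply: (leq_trans cardL).
  by rewrite leq_mul2r card_le_pivots orbT.
have := card_nonisolated; have := cardsC isolated; have := cardsC pivots.
rewrite card_ord; lia.
Qed.

End Pivots.

Lemma parity_const_setT n (i j : 'I_n) : j != i -> ~~ parity_const [set: cube n] i j.
Proof.
move=> ji; apply/forall_inPn; exists [ffun => false]; rewrite ?inE //.
apply/forall_inPn; exists [ffun k => k == i]; rewrite ?inE //.
by rewrite !ffunE eqxx (negbTE ji).
Qed.

Section Covariance.
Variables (R : realDomainType) (T : finType) (L : {set T}).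
Implicit Types (u v : T -> R).

(* |L|^2 times the covariance of u and v under the uniform distribution on L. *)
Definition cov u v :=
  #|L|%:R * \sum_(y in L) u y * v y - (\sum_(y in L) u y) * (\sum_(y in L) v y).

Lemma covC u v : cov u v = cov v u.
Proof.
rewrite /cov [(\sum_(y in L) u y) * _]mulrC.
by congr (_ * _ - _); apply: eq_bigr => y _; rewrite mulrC.
Qed.

Lemma cov_suml (I : finType) (P : pred I) (f : I -> T -> R) v :
  cov (fun y => \sum_(i | P i) f i y) v = \sum_(i | P i) cov (f i) v.
Proof.
rewrite /cov sumrB -mulr_sumr -mulr_suml; congr (_ * _ - _ * _).
  by under eq_bigr do rewrite mulr_suml; rewrite exchange_big.
exact: exchange_big.
Qed.

Lemma cov_sumr (I : finType) (P : pred I) (f : I -> T -> R) u :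
  cov u (fun y => \sum_(i | P i) f i y) = \sum_(i | P i) cov u (f i).
Proof. by rewrite covC cov_suml; under eq_bigr do rewrite covC. Qed.

Lemma cov_ge0 u : 0 <= cov u u.
Proof.
set s : R := #|L|%:R; set S := \sum_(y in L) u y; set Q := \sum_(y in L) u y ^+ 2.
have pairs y : \sum_(z in L) (u y - u z) ^+ 2 = s * u y ^+ 2 - 2 * u y * S + Q.
  transitivity (\sum_(z in L) (u y ^+ 2 - 2 * u y * u z + u z ^+ 2)).
    by apply: eq_bigr => z _; ring.
  by rewrite big_split sumrB /= sumr_const -mulr_sumr -(mulr_natl (u y ^+ 2)).
have pair_form : cov u u *+ 2 = \sum_(y in L) \sum_(z in L) (u y - u z) ^+ 2.
  rewrite (eq_bigr _ (fun y _ => pairs y)).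
  rewrite big_split sumrB /= -mulr_sumr -mulr_suml -mulr_sumr sumr_const -/Q -/S.
  by rewrite /cov -/s -/S (eq_bigr _ (fun y _ => esym (expr2 (u y)))) -/Q -mulr_natl; ring.
rewrite -(pmulrn_lge0 _ (isT : 0 < 2)%N) pair_form.
by rewrite sumr_ge0 // => y _; rewrite sumr_ge0 // => z _; apply: sqr_ge0.
Qed.

End Covariance.

Section CoordinateCovariance.
Variables (R : realDomainType) (n : nat) (L : {set cube n}).
Hypothesis affL : affine L.
Implicit Types (i j : 'I_n).

Definition xcoord i (y : cube n) : R := xval y i.

Definition coord_sum (y : cube n) : R := \sum_i xcoord i y.

Lemma sum_coord_eq0 i : ~~ coord_const L i -> \sum_(y in L) xcoord i y = 0.
Proof.
case/forall_inPn => a aL /forall_inPn[b bL ab].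
apply: (sum_odd_translation affL aL bL) => y; rewrite /xcoord !xval_add.
by move: ab; rewrite /xval; case: (a i); case: (b i) => //= _; ring.
Qed.

Lemma sum_coord_mul_eq0 i j :
  ~~ parity_const L i j -> \sum_(y in L) xcoord i y * xcoord j y = 0.
Proof.
case/forall_inPn => a aL /forall_inPn[b bL ab].
apply: (sum_odd_translation affL aL bL) => y; rewrite /xcoord !xval_add.
by move: ab; rewrite /xval; case: (a i); case: (b i); case: (a j); case: (b j) => //= _; ring.
Qed.

Lemma sum_coord_sq i : \sum_(y in L) xcoord i y * xcoord i y = #|L|%:R.
Proof.
rewrite -[RHS]mulr1 mulr_natl -sumr_const.
by apply: eq_bigr => y _; rewrite /xcoord /xval; case: (y i); rewrite ?mulrNN mulr1.
Qed.

Lemma cov_coord_isolated_self i :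
  i \in isolated L -> cov L (xcoord i) (xcoord i) = #|L|%:R ^+ 2.
Proof.
by rewrite inE => /andP[ci _]; rewrite /cov sum_coord_sq sum_coord_eq0 // mul0r subr0 expr2.
Qed.

Lemma cov_coord_isolated i j : i \in isolated L -> j != i -> cov L (xcoord i) (xcoord j) = 0.
Proof.
rewrite inE => /andP[ci /forallP iso] ji.
have pij : ~~ parity_const L i j by have := iso j; rewrite ji.
by rewrite /cov sum_coord_mul_eq0 // sum_coord_eq0 // mulr0 mul0r subr0.
Qed.

Lemma cov_sum_coord_ge :
  #|isolated L|%:R * #|L|%:R ^+ 2 <=
  cov L coord_sum coord_sum.
Proof.
set U := isolated L; set g := coord_sum.
set g' := fun y => \sum_(j | j \notin U) xcoord j y.
have covU i : i \in U -> cov L (xcoord i) g = #|L|%:R ^+ 2.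
  move=> iU; rewrite cov_sumr (bigD1 i) //= cov_coord_isolated_self // big1 ?addr0 //.
  by move=> j; apply: cov_coord_isolated.
have covNU i : i \notin U -> cov L (xcoord i) g = cov L (xcoord i) g'.
  move=> iU; rewrite !cov_sumr (bigID (mem U)) /= big1 ?add0r // => j jU.
  by rewrite covC cov_coord_isolated //; apply: contraNneq iU => ->.
rewrite cov_suml (bigID (mem U)) /= (eq_bigr _ covU) (eq_bigr _ covNU) -cov_suml.
by rewrite sumr_const -(mulr_natl (_ ^+ 2)) lerDl cov_ge0.
Qed.

End CoordinateCovariance.

Arguments xcoord R {n}.
Arguments coord_sum R {n}.

Lemma sum_class_means (R : numFieldType) (T : finType) (K : eqType) (k : T -> K)
    (G : T -> R) :
  \sum_x (\sum_(y in [set y | k y == k x]) G y) / #|[set y | k y == k x]|%:R = \sum_y G y.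
Proof.
set C := fun x => [set y | k y == k x].
have C_sym x y : (y \in C x) = (x \in C y) by rewrite !inE eq_sym.
have C_eq x y : y \in C x -> C y = C x.
  by rewrite inE => /eqP kxy; apply/setP => z; rewrite !inE kxy.
have C_neq0 y : #|C y|%:R != 0 :> R.
  by rewrite pnatr_eq0 -lt0n; apply/card_gt0P; exists y; rewrite inE.
transitivity (\sum_x \sum_(y in C x) G y / #|C y|%:R).
  by apply: eq_bigr => x _; rewrite mulr_suml; apply: eq_bigr => y /C_eq ->.
rewrite (exchange_big_dep predT) //=; apply: eq_bigr => y _.
rewrite (eq_bigl (mem (C y))) => [|x]; last by rewrite /= C_sym.
by rewrite sumr_const -(mulr_natr (_ / _)) divfK.
Qed.

Lemma sum_coord_sum_sq (R : realDomainType) n :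
  \sum_(y : cube n) coord_sum R y ^+ 2 = n%:R * #|{: cube n}|%:R.
Proof.
have sum_setT (F : cube n -> R) : \sum_(y in [set: cube n]) F y = \sum_y F y.
  by apply: eq_bigl => y; rewrite inE.
under eq_bigr do rewrite /coord_sum expr2 big_distrlr /=.
rewrite exchange_big.
transitivity (\sum_(i < n) (#|{: cube n}|%:R : R)); last first.
  by rewrite sumr_const card_ord mulr_natl.
apply: eq_bigr => i _; rewrite exchange_big (bigD1 i) //= -sum_setT sum_coord_sq cardsT.
rewrite big1 ?addr0 // => j ji; rewrite -sum_setT sum_coord_mul_eq0 //.
  exact: affine_setT.
exact: parity_const_setT.
Qed.

Section LeafVectors.
Variables (R : realFieldType) (n : nat) (T : pdt n).

Lemma sum_leafvec x :
  \sum_i leafvec (R := R) T x i = (\sum_(y in leaf R T x) coord_sum R y) / #|leaf R T x|%:R.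
Proof.
by rewrite /leafvec -mulr_suml exchange_big; congr (_ / _); apply: eq_bigl => y; rewrite inE.
Qed.

Lemma leafvec_sum_sq_le x :
  (\sum_i leafvec (R := R) T x i) ^+ 2 <=
  (\sum_(y in leaf R T x) coord_sum R y ^+ 2) / #|leaf R T x|%:R - (n%:R - 2 * (depth T)%:R).
Proof.
set L := leaf R T x; set s : R := #|L|%:R; set c : R := n%:R - 2 * (depth T)%:R.
have s_gt0 : 0 < s by rewrite ltr0n; apply/card_gt0P; exists x; rewrite inE.
have c_le_iso : c <= #|isolated L|%:R.
  rewrite lerBlDr -natrM -natrD ler_nat; apply: card_isolated.
  have := @card_leaf R n [set: cube n] T x (@affine_setT n) (in_setT x).
  by rewrite setTI cardsT card_ffun card_bool card_ord.
rewrite sum_leafvec -/L -/s -subr_ge0.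
set q := \sum_(y in L) _ ^+ 2; set a := \sum_(y in L) _.
have var_ge : c * s ^+ 2 <= s * q - a ^+ 2.
  have -> : s * q - a ^+ 2 = cov L (coord_sum R) (coord_sum R).
    by rewrite /cov -/s -/a expr2; under [in RHS]eq_bigr do rewrite -expr2.
  apply: le_trans (cov_sum_coord_ge R (@affine_leaf R n T x)).
  by rewrite ler_wpM2r ?sqr_ge0.
have -> : q / s - c - (a / s) ^+ 2 = (s * q - a ^+ 2 - c * s ^+ 2) / s ^+ 2.
  by field; rewrite gt_eqF.
by rewrite divr_ge0 ?sqr_ge0 // subr_ge0.
Qed.

End LeafVectors.

Theorem lemma1 (R : realFieldType) (n d : nat) (T : pdt n) :
  depth T = d ->
  leafExp (R := R) T (fun l => (\sum_(i < n) l i) ^+ 2) <= 2 * d%:R.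
Proof.
move=> <-; rewrite /leafExp.
have N_gt0 : 0 < #|{: cube n}|%:R :> R.
  by rewrite ltr0n; apply/card_gt0P; exists [ffun => false].
rewrite ler_pdivrMr //.
apply: (le_trans (ler_sum _ (fun x _ => leafvec_sum_sq_le R T x))).
rewrite sumrB (sum_class_means (reach (R := R) T) (fun y => coord_sum R y ^+ 2)).
set c : R := n%:R - 2 * (depth T)%:R.
have -> : \sum_(x : cube n) c = c * #|cube n|%:R by rewrite sumr_const -(mulr_natr c).
by rewrite sum_coord_sum_sq /c; lra.
Qed.
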